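(* Let $n\in\mathbb N$, $\varepsilon,h,d>0$, $q\in(0,1)$. Let $\bar u\in(q,1)$ be a root of $g(u):=u(1-u)(u+q)-\varepsilon hq(u-q)$, and set $S:=(q,\bar u)^2\subset\mathbb R^2$. Let $u_0,v_0\in BUC(\mathbb R^n)$ with $(u_0(x),v_0(x))\in S$ for all $x\in\mathbb R^n$, and let $(u,v)$ be the time-global non-negative classical solution of (BZ) with these initial data. Then $(u(x,t),v(x,t))\in S$ for all $x\in\mathbb R^n$ and all $t>0$.
   Context: $BUC(\mathbb R^n)$ denotes the bounded uniformly continuous functions on $\mathbb R^n$ with the sup norm. (BZ) is the system $\partial_t u=\Delta u+\frac1\varepsilon u(1-u)-hv\frac{u-q}{u+q}$, $\partial_t v=d\Delta v-v+u$ in $\mathbb R^n\times(0,\infty)$, $u|_{t=0}=u_0$, $v|_{t=0}=v_0$. For non-negative $u_0,v_0\in BUC$ there is a unique global non-negative classical solution $(u,v)\in C([0,\infty);BUC(\mathbb R^n))^2$ ($C^1$ in $t$, $C^2$ in $x$ for $t>0$). *)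

From Stdlib Require Import Reals.
From Stdlib Require Fin.
Open Scope R_scope.

Definition pt (n : nat) : Type := Fin.t n -> R.

Definition upd {n : nat} (x : pt n) (i : Fin.t n) (s : R) : pt n :=
  fun j => if Fin.eq_dec j i then s else x j.

Fixpoint sumFin (n : nat) : (Fin.t n -> R) -> R :=
  match n with
  | O => fun _ => 0
  | S m => fun f => f Fin.F1 + sumFin m (fun i => f (Fin.FS i))
  end.

Definition close {n : nat} (x y : pt n) (delta : R) : Prop :=
  forall i, Rabs (x i - y i) < delta.

Definition BUC {n : nat} (f : pt n -> R) : Prop :=
  (exists M, forall x, Rabs (f x) <= M) /\
  (forall eps, eps > 0 -> exists delta, delta > 0 /\
     forall x y, close x y delta -> Rabs (f x - f y) < eps).

Definition C_BUC {n : nat} (u : pt n -> R -> R) : Prop :=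
  (forall t, 0 <= t -> BUC (fun x => u x t)) /\
  (forall t0, 0 <= t0 -> forall eps, eps > 0 -> exists delta, delta > 0 /\
     forall t, 0 <= t -> Rabs (t - t0) < delta ->
       forall x, Rabs (u x t - u x t0) <= eps).

Definition cont_pos {n : nat} (f : pt n -> R -> R) : Prop :=
  forall x t, 0 < t -> forall eps, eps > 0 -> exists delta, delta > 0 /\
    forall y s, 0 < s -> close y x delta -> Rabs (s - t) < delta ->
      Rabs (f y s - f x t) < eps.

Definition classical {n : nat} (u ut lap : pt n -> R -> R) : Prop :=
  cont_pos u /\ cont_pos ut /\
  (forall x t, 0 < t -> derivable_pt_lim (fun s => u x s) t (ut x t)) /\
  exists (D1 D2 : Fin.t n -> pt n -> R -> R),
    (forall i, cont_pos (D1 i) /\ cont_pos (D2 i)) /\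
    (forall i x t, 0 < t ->
       derivable_pt_lim (fun s => u (upd x i s) t) (x i) (D1 i x t)) /\
    (forall i x t, 0 < t ->
       derivable_pt_lim (fun s => D1 i (upd x i s) t) (x i) (D2 i x t)) /\
    (forall x t, 0 < t -> lap x t = sumFin n (fun i => D2 i x t)).

Definition BZ_solution (n : nat) (eps h d q : R) (u0 v0 : pt n -> R)
    (u v : pt n -> R -> R) : Prop :=
  C_BUC u /\ C_BUC v /\
  (forall x, u x 0 = u0 x) /\ (forall x, v x 0 = v0 x) /\
  (forall x t, 0 <= t -> 0 <= u x t /\ 0 <= v x t) /\
  exists ut vt lapu lapv : pt n -> R -> R,
    classical u ut lapu /\ classical v vt lapv /\
    (forall x t, 0 < t ->
       ut x t = lapu x t + / eps * u x t * (1 - u x t)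
                - h * v x t * (u x t - q) / (u x t + q)) /\
    (forall x t, 0 < t ->
       vt x t = d * lapv x t - v x t + u x t).

Definition g_BZ (eps h q u : R) : R := u * (1 - u) * (u + q) - eps * h * q * (u - q).

From Stdlib Require Import Reals.
From Stdlib Require Fin.
From Stdlib Require Import Lra Psatz FunctionalExtensionality ClassicalEpsilon.
Open Scope R_scope.

(* The argument is a comparison principle on the whole space.  The weak maximum principle
   (max_principle) states that a function w in C([0,oo); BUC(R^n)) with w >= 0
   at t = 0 and  K w <= w_t - d lap w  wherever w <= 0 stays non-negative; were
   it not, the penalised function  e^(-lam t) w + del (|x|^2 + (2 d n + 1) t)
   would have a negative minimum over a large cube times [0, T], at an interior
   point and a positive time, where the derivative tests contradict the
   differential inequality.  Applied to affine expressions a u + b(t)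
   (comparison_affine), it gives first the closed bounds q <= u, v <= ubar (the
   upper bound for u uses that ubar is a root of g), then strict bounds from
   the barriers q + c tau, q + k tau^2, ubar - m tau^4 and ubar - m' tau^5 with
   tau(t) = t / (1 + t), each barrier feeding the next.  The theorem follows by
   unpacking the definition of a solution. *)

Lemma sumFin_ext n (f g : Fin.t n -> R) :
  (forall i, f i = g i) -> sumFin n f = sumFin n g.
Proof.
  revert f g; induction n as [|n IH]; intros f g H; simpl; [reflexivity|].
  rewrite H, (IH _ (fun i => g (Fin.FS i))); auto.
Qed.

Lemma sumFin_plus n (f g : Fin.t n -> R) :
  sumFin n (fun i => f i + g i) = sumFin n f + sumFin n g.
Proof.
  revert f g; induction n as [|n IH]; intros f g; simpl; [lra|].
  rewrite (IH (fun i => f (Fin.FS i)) (fun i => g (Fin.FS i))); lra.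
Qed.

Lemma sumFin_scal n (f : Fin.t n -> R) c :
  sumFin n (fun i => c * f i) = c * sumFin n f.
Proof.
  revert f; induction n as [|n IH]; intros f; simpl; [lra|].
  rewrite (IH (fun i => f (Fin.FS i))); lra.
Qed.

Lemma sumFin_const n c : sumFin n (fun _ => c) = INR n * c.
Proof.
  induction n as [|n IH]; [simpl; lra|].
  rewrite S_INR; simpl sumFin; rewrite IH; lra.
Qed.

Lemma sumFin_le n (f g : Fin.t n -> R) :
  (forall i, f i <= g i) -> sumFin n f <= sumFin n g.
Proof.
  revert f g; induction n as [|n IH]; intros f g H; simpl; [lra|].
  pose proof (H Fin.F1).
  pose proof (IH (fun i => f (Fin.FS i)) (fun i => g (Fin.FS i)) (fun i => H _)).
  lra.
Qed.

Lemma sumFin_nonneg n (f : Fin.t n -> R) :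
  (forall i, 0 <= f i) -> 0 <= sumFin n f.
Proof.
  intro H; replace 0 with (sumFin n (fun _ => 0)) by (rewrite sumFin_const; lra).
  now apply sumFin_le.
Qed.

Lemma sumFin_ge_term n (f : Fin.t n -> R) i :
  (forall j, 0 <= f j) -> f i <= sumFin n f.
Proof.
  revert f i; induction n as [|n IH]; intros f i H; [inversion i|].
  simpl; pattern i; apply Fin.caseS'.
  - pose proof (sumFin_nonneg n (fun j => f (Fin.FS j)) (fun j => H _)); lra.
  - intro p; pose proof (H Fin.F1).
    pose proof (IH (fun j => f (Fin.FS j)) p (fun j => H _)); simpl in *; lra.
Qed.

Lemma sumFin_upd n (f : Fin.t n -> R) i a :
  sumFin n (fun j => if Fin.eq_dec j i then a else f j) = sumFin n f - f i + a.
Proof.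
  revert f i; induction n as [|n IH]; intros f i; [inversion i|].
  pattern i; apply Fin.caseS'; simpl.
  - destruct (Fin.eq_dec Fin.F1 Fin.F1) as [_|E]; [lra|congruence].
  - intro p.
    rewrite (sumFin_ext _ _ (fun j => if Fin.eq_dec j p then a else f (Fin.FS j))).
    + rewrite (IH (fun j => f (Fin.FS j)) p); lra.
    + intro j; destruct (Fin.eq_dec (Fin.FS j) (Fin.FS p)) as [E|E];
        destruct (Fin.eq_dec j p) as [E'|E']; auto.
      * apply Fin.FS_inj in E; congruence.
      * subst; congruence.
Qed.

Lemma eps_continuity_pt (f : R -> R) c :
  (forall e, e > 0 -> exists dl, dl > 0 /\
     forall t, Rabs (t - c) < dl -> Rabs (f t - f c) < e) ->
  continuity_pt f c.
Proof.
  intros H e He; destruct (H e He) as [dl [Hdl Hf]].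
  exists dl; split; [exact Hdl|]; intros t [_ Ht]; exact (Hf t Ht).
Qed.

Lemma continuity_pt_eps (f : R -> R) c :
  continuity_pt f c ->
  forall e, e > 0 -> exists dl, dl > 0 /\
    forall t, Rabs (t - c) < dl -> Rabs (f t - f c) < e.
Proof.
  intros Hc e He; destruct (Hc e He) as [dl [Hdl Hf]].
  exists dl; split; [exact Hdl|]; intros t Ht.
  destruct (Req_dec t c) as [->|Hne].
  - unfold Rminus; rewrite Rplus_opp_r, Rabs_R0; lra.
  - apply Hf; split; [split; [exact I|congruence]|exact Ht].
Qed.

Lemma Rabs_le_iff a b : Rabs a <= b <-> - b <= a <= b.
Proof. unfold Rabs; destruct Rcase_abs; split; intros; lra. Qed.

Lemma frac_lt_1 a : 0 <= a -> a / (a + 1) < 1.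
Proof.
  intro Ha; apply Rmult_lt_reg_r with (a + 1); [lra|].
  unfold Rdiv; rewrite Rmult_assoc, Rinv_l; lra.
Qed.

Lemma Rabs_mult_small a y e : e > 0 -> Rabs y <= e / (Rabs a + 1) -> Rabs (a * y) < e.
Proof.
  intros He Hy; rewrite Rabs_mult.
  pose proof (Rabs_pos a) as Ha; pose proof (frac_lt_1 _ Ha).
  apply Rle_lt_trans with (Rabs a * (e / (Rabs a + 1))); [apply Rmult_le_compat_l; lra|].
  replace (Rabs a * (e / (Rabs a + 1))) with (e * (Rabs a / (Rabs a + 1))) by (field; lra).
  nra.
Qed.

Lemma scaled_tol_pos a e : e > 0 -> e / (Rabs a + 1) > 0.
Proof. intro; apply Rdiv_lt_0_compat; [lra|pose proof (Rabs_pos a); lra]. Qed.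

Definition unif_cont_on {n : nat} (A : pt n -> Prop) (f : pt n -> R) : Prop :=
  forall e, e > 0 -> exists dl, dl > 0 /\
    forall x y, A x -> A y -> close x y dl -> Rabs (f x - f y) < e.

Definition inbox {n : nat} (R0 : R) (x : pt n) : Prop := forall i, Rabs (x i) <= R0.

Lemma close_refl n (x : pt n) dl : dl > 0 -> close x x dl.
Proof. intros H i; rewrite Rminus_diag, Rabs_R0; lra. Qed.

Definition pcons {n : nat} (s : R) (x : pt n) : pt (S n) :=
  fun j => Fin.caseS' j (fun _ => R) s x.
Definition ptl {n : nat} (x : pt (S n)) : pt n := fun i => x (Fin.FS i).

Lemma pcons_eta n (x : pt (S n)) : pcons (x Fin.F1) (ptl x) = x.
Proof. apply functional_extensionality; intro j; pattern j; apply Fin.caseS'; reflexivity. Qed.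

Lemma inbox_pcons n R0 s (x : pt n) :
  - R0 <= s <= R0 -> inbox R0 x -> inbox R0 (pcons s x).
Proof. intros Hs Hx j; pattern j; apply Fin.caseS'; simpl; [apply Rabs_le_iff|]; auto. Qed.

Lemma close_pcons n (x y : pt n) a b dl :
  Rabs (a - b) < dl -> close x y dl -> close (pcons a x) (pcons b y) dl.
Proof. intros Hs Hx j; pattern j; apply Fin.caseS'; simpl; auto. Qed.

Definition clamp (R0 c : R) : R := Rmax (- R0) (Rmin R0 c).

Lemma clamp_lip R0 a b : 0 <= R0 -> Rabs (clamp R0 a - clamp R0 b) <= Rabs (a - b).
Proof. intro; unfold clamp, Rmax, Rmin; repeat destruct Rle_dec; unfold Rabs; repeat destruct Rcase_abs; lra. Qed.

Lemma clamp_range R0 a : 0 <= R0 -> - R0 <= clamp R0 a <= R0.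
Proof. intro; unfold clamp, Rmax, Rmin; repeat destruct Rle_dec; lra. Qed.

Lemma clamp_id R0 a : - R0 <= a <= R0 -> clamp R0 a = a.
Proof. intro; unfold clamp, Rmax, Rmin; repeat destruct Rle_dec; lra. Qed.

Lemma min_value_close {X P : Type} (F : P -> X -> R) (I : P -> Prop) (sel : X -> P) x y e :
  I (sel x) -> I (sel y) ->
  (forall c, I c -> F (sel x) x <= F c x) -> (forall c, I c -> F (sel y) y <= F c y) ->
  (forall s, I s -> Rabs (F s x - F s y) < e) ->
  Rabs (F (sel x) x - F (sel y) y) < e.
Proof.
  intros Hx Hy Mx My Hc.
  pose proof (Mx _ Hy); pose proof (My _ Hx).
  pose proof (Hc _ Hx) as A; pose proof (Hc _ Hy) as B.
  apply Rabs_def2 in A; apply Rabs_def2 in B; apply Rabs_def1; lra.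
Qed.

Lemma evt_leading_coordinate n R0 (F : pt (S n) -> R) (x' : pt n) :
  0 <= R0 -> unif_cont_on (inbox R0) F -> inbox R0 x' ->
  exists s, - R0 <= s <= R0 /\ forall c, - R0 <= c <= R0 ->
    F (pcons (clamp R0 s) x') <= F (pcons (clamp R0 c) x').
Proof.
  intros HR HF Hx'.
  destruct (continuity_ab_min (fun s => F (pcons (clamp R0 s) x')) (- R0) R0)
    as [s [Hs1 Hs2]]; [lra| |exists s; split; auto].
  intros c _; apply eps_continuity_pt; intros e He.
  destruct (HF e He) as [dl [Hdl Hdl2]]; exists dl; split; [exact Hdl|].
  intros t Ht; apply Hdl2; try (apply inbox_pcons; [apply clamp_range|]; auto).
  apply close_pcons; [|apply close_refl; exact Hdl].
  eapply Rle_lt_trans; [apply clamp_lip|]; auto.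
Qed.

(* Extreme value theorem on the cube: a function uniformly continuous on
   [-R0, R0]^n attains its minimum there.  Induction on n, minimising first
   in the leading coordinate. *)
Lemma evt_box n (R0 : R) (F : pt n -> R) :
  0 <= R0 -> unif_cont_on (inbox R0) F ->
  exists xs, inbox R0 xs /\ forall y, inbox R0 y -> F xs <= F y.
Proof.
  revert F; induction n as [|n IH]; intros F HR HF.
  - exists (fun _ => 0); split; [intro i; inversion i|].
    intros y _; replace y with (fun _ : Fin.t 0 => 0); [lra|].
    apply functional_extensionality; intro i; inversion i.
  - set (I := fun s => - R0 <= s <= R0).
    set (H := fun s (x' : pt n) => F (pcons (clamp R0 s) x')).
    assert (Hmin : forall x', inbox R0 x' -> exists s, I s /\ forall c, I c -> H s x' <= H c x')
      by (intros x' Hx'; apply (evt_leading_coordinate n R0 F x' HR HF Hx')).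
    set (sel := fun x' => epsilon (inhabits 0)
                  (fun s => I s /\ forall c, I c -> H s x' <= H c x')).
    assert (Hsel : forall x', inbox R0 x' -> I (sel x') /\ forall c, I c -> H (sel x') x' <= H c x')
      by (intros x' Hx'; apply epsilon_spec; auto).
    destruct (IH (fun x' => H (sel x') x')) as [xs' [Hxs' Hmin']]; [exact HR| |].
    + intros e He; destruct (HF e He) as [dl [Hdl Hdl2]]; exists dl; split; [exact Hdl|].
      intros x y Hx Hy Hxy.
      destruct (Hsel x Hx) as [Ix Mx]; destruct (Hsel y Hy) as [Iy My].
      apply (min_value_close H I sel x y e Ix Iy Mx My).
      intros s Is; apply Hdl2; try (apply inbox_pcons; [apply clamp_range|]; auto).
      apply close_pcons; [rewrite Rminus_diag, Rabs_R0; exact Hdl|exact Hxy].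
    + destruct (Hsel xs' Hxs') as [Is _].
      exists (pcons (sel xs') xs'); split; [apply inbox_pcons; auto|].
      intros y Hy; rewrite <- (pcons_eta n y).
      assert (Hyt : inbox R0 (ptl y)) by (intro i; apply Hy).
      assert (Hy1 : I (y Fin.F1)) by (apply Rabs_le_iff, Hy).
      destruct (Hsel (ptl y) Hyt) as [_ My].
      pose proof (My _ Hy1); pose proof (Hmin' _ Hyt).
      unfold H in *; rewrite (clamp_id R0 _ Hy1), (clamp_id R0 _ Is) in *; lra.
Qed.

Definition N2 {n : nat} (x : pt n) : R := sumFin n (fun i => x i * x i).

Lemma N2_nonneg n (x : pt n) : 0 <= N2 x.
Proof. apply sumFin_nonneg; intro; nra. Qed.

Lemma N2_ge n (x : pt n) i : x i * x i <= N2 x.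
Proof. apply (sumFin_ge_term n (fun i => x i * x i)); intro; nra. Qed.

Lemma upd_same n (x : pt n) i s : upd x i s i = s.
Proof. unfold upd; destruct (Fin.eq_dec i i); congruence. Qed.

Lemma upd_other n (x : pt n) i j s : j <> i -> upd x i s j = x j.
Proof. intro H; unfold upd; destruct (Fin.eq_dec j i); congruence. Qed.

Lemma upd_upd n (x : pt n) i s s' : upd (upd x i s) i s' = upd x i s'.
Proof. apply functional_extensionality; intro j; unfold upd; destruct (Fin.eq_dec j i); auto. Qed.

Lemma upd_id n (x : pt n) i : upd x i (x i) = x.
Proof. apply functional_extensionality; intro j; unfold upd; destruct (Fin.eq_dec j i); subst; auto. Qed.

Lemma N2_upd n (x : pt n) i s : N2 (upd x i s) = N2 x - x i * x i + s * s.
Proof.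
  unfold N2; rewrite <- (sumFin_upd n (fun j => x j * x j) i (s * s)).
  apply sumFin_ext; intro j; unfold upd; destruct (Fin.eq_dec j i); auto.
Qed.

Lemma N2_lip n (x y : pt n) R0 dl : inbox R0 x -> inbox R0 y -> close x y dl ->
  Rabs (N2 x - N2 y) <= INR n * (2 * R0 * dl).
Proof.
  intros Hx Hy Hc.
  assert (H : forall i, - (2 * R0 * dl) <= x i * x i - y i * y i <= 2 * R0 * dl).
  { intro i; specialize (Hx i); specialize (Hy i); specialize (Hc i).
    apply Rabs_le_iff in Hx, Hy; apply Rabs_def2 in Hc; split; nra. }
  unfold N2; rewrite <- sumFin_const.
  replace (sumFin n (fun i => x i * x i) - sumFin n (fun i => y i * y i))
    with (sumFin n (fun i => x i * x i + -1 * (y i * y i))) by (rewrite sumFin_plus, sumFin_scal; ring).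
  apply Rabs_le_iff; split.
  - replace (- sumFin n (fun _ => 2 * R0 * dl)) with (sumFin n (fun _ => - (2 * R0 * dl)))
      by (rewrite !sumFin_const; ring).
    apply sumFin_le; intro i; pose proof (H i); lra.
  - apply sumFin_le; intro i; pose proof (H i); lra.
Qed.

Lemma N2_unif_cont n R0 : 0 <= R0 -> unif_cont_on (inbox R0) (@N2 n).
Proof.
  intros HR e He.
  assert (Hk : 0 <= INR n * (2 * R0)) by (pose proof (pos_INR n); nra).
  exists (e / (INR n * (2 * R0) + 1)); split; [apply Rdiv_lt_0_compat; lra|].
  intros x y Hx Hy Hxy.
  eapply Rle_lt_trans; [apply (N2_lip n x y R0 _ Hx Hy Hxy)|].
  replace (INR n * (2 * R0 * (e / (INR n * (2 * R0) + 1))))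
    with (e * (INR n * (2 * R0) / (INR n * (2 * R0) + 1))) by (field; lra).
  pose proof (frac_lt_1 _ Hk); nra.
Qed.

Lemma unif_cont_lincomb n (A : pt n -> Prop) (f g : pt n -> R) a b c :
  unif_cont_on A f -> unif_cont_on A g ->
  unif_cont_on A (fun x => a * f x + b * g x + c).
Proof.
  intros Hf Hg e He.
  destruct (Hf _ (scaled_tol_pos a (e / 2) ltac:(lra))) as [dl1 [Hdl1 Hf']].
  destruct (Hg _ (scaled_tol_pos b (e / 2) ltac:(lra))) as [dl2 [Hdl2 Hg']].
  exists (Rmin dl1 dl2); split; [apply Rmin_glb_lt; assumption|].
  intros x y Hx Hy Hxy.
  assert (Hxy1 : close x y dl1) by (intro i; eapply Rlt_le_trans; [apply Hxy|apply Rmin_l]).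
  assert (Hxy2 : close x y dl2) by (intro i; eapply Rlt_le_trans; [apply Hxy|apply Rmin_r]).
  pose proof (Rabs_mult_small a _ (e / 2) ltac:(lra) (Rlt_le _ _ (Hf' x y Hx Hy Hxy1))).
  pose proof (Rabs_mult_small b _ (e / 2) ltac:(lra) (Rlt_le _ _ (Hg' x y Hx Hy Hxy2))).
  replace (a * f x + b * g x + c - (a * f y + b * g y + c))
    with (a * (f x - f y) + b * (g x - g y)) by ring.
  eapply Rle_lt_trans; [apply Rabs_triang|lra].
Qed.

Lemma deriv_left_min (G : R -> R) s0 c eta : eta > 0 -> derivable_pt_lim G s0 c ->
  (forall s, s0 - eta < s <= s0 -> G s0 <= G s) -> c <= 0.
Proof.
  intros He Hd Hm; destruct (Rle_or_lt c 0) as [|Hc]; [assumption|exfalso].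
  destruct (Hd c Hc) as [del Hdel].
  pose proof (Rmin_l del eta); pose proof (Rmin_r del eta).
  assert (Hpos : 0 < Rmin del eta) by (apply Rmin_glb_lt; [apply cond_pos|lra]).
  set (h := - Rmin del eta / 2).
  specialize (Hdel h ltac:(unfold h; lra) ltac:(rewrite Rabs_left; unfold h; lra)).
  assert (A : G s0 <= G (s0 + h)) by (apply Hm; unfold h; lra).
  assert (B : / h < 0) by (apply Rinv_lt_0_compat; unfold h; lra).
  assert (C : (G (s0 + h) - G s0) / h <= 0) by (unfold Rdiv; nra).
  apply Rabs_def2 in Hdel; lra.
Qed.

(* The first derivative vanishes there, so a negative second
   derivative would make F decrease just to the right of s0. *)
Lemma second_deriv_min (F F1 : R -> R) s0 c eta : eta > 0 ->
  (forall s, derivable_pt_lim F s (F1 s)) -> derivable_pt_lim F1 s0 c ->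
  (forall s, Rabs (s - s0) < eta -> F s0 <= F s) -> 0 <= c.
Proof.
  intros He HF Hd Hm; destruct (Rle_or_lt 0 c) as [|Hc]; [assumption|exfalso].
  assert (Hcrit : F1 s0 = 0).
  { apply (deriv_minimum F (s0 - eta) (s0 + eta) s0 (exist _ (F1 s0) (HF s0))); try lra.
    intros s H1 H2; apply Hm; apply Rabs_def1; lra. }
  destruct (Hd (- c / 2) ltac:(lra)) as [del Hdel].
  pose proof (Rmin_l del eta); pose proof (Rmin_r del eta).
  assert (Hpos : 0 < Rmin del eta) by (apply Rmin_glb_lt; [apply cond_pos|lra]).
  set (h0 := Rmin del eta / 2).
  destruct (MVT_cor2 F F1 s0 (s0 + h0)) as [xi [Exi Hxi]];
    [unfold h0; lra|intros; apply HF|].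
  specialize (Hdel (xi - s0) ltac:(lra) ltac:(rewrite Rabs_right; unfold h0 in *; lra)).
  replace (s0 + (xi - s0)) with xi in Hdel by ring.
  rewrite Hcrit, Rminus_0_r in Hdel; apply Rabs_def2 in Hdel.
  assert (Hneg : F1 xi < 0).
  { assert (Hinv : 0 < / (xi - s0)) by (apply Rinv_0_lt_compat; lra).
    unfold Rdiv in Hdel; destruct (Rlt_or_le (F1 xi) 0) as [|Hp]; [assumption|nra]. }
  assert (F s0 <= F (s0 + h0)) by (apply Hm; rewrite Rabs_right; unfold h0 in *; lra).
  unfold h0 in *; nra.
Qed.

Definition cut (T t : R) : R := Rmax 0 (Rmin T t).

Lemma cut_range T t : 0 <= T -> 0 <= cut T t <= T.
Proof. intro; unfold cut, Rmax, Rmin; repeat destruct Rle_dec; lra. Qed.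

Lemma cut_id T t : 0 <= t <= T -> cut T t = t.
Proof. intro; unfold cut, Rmax, Rmin; repeat destruct Rle_dec; lra. Qed.

Lemma cut_lip T t c : 0 <= c <= T -> Rabs (cut T t - c) <= Rabs (t - c).
Proof. intro; unfold cut, Rmax, Rmin; repeat destruct Rle_dec; unfold Rabs; repeat destruct Rcase_abs; lra. Qed.

(* An element of C([0,oo); BUC(R^n)) is bounded on R^n x [0, T]: the
   sup-norm t |-> sup_x |w x t| is continuous, hence bounded on [0, T]. *)
Lemma C_BUC_bounded n (w : pt n -> R -> R) T : 0 <= T -> C_BUC w ->
  exists M, forall x t, 0 <= t <= T -> Rabs (w x t) <= M.
Proof.
  intros HT [Hb Hc].
  set (E := fun t y => exists x, y = Rabs (w x (Rmax 0 t))).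
  assert (Hlub : forall t, exists m, is_lub (E t) m).
  { intro t; destruct (Hb (Rmax 0 t) (Rmax_l _ _)) as [[M HM] _].
    destruct (completeness (E t)) as [m Hm]; [| |exists m; exact Hm].
    - exists M; intros y [x ->]; apply HM.
    - exists (Rabs (w (fun _ => 0) (Rmax 0 t))), (fun _ => 0); reflexivity. }
  set (sup := fun t => epsilon (inhabits 0) (fun m => is_lub (E t) m)).
  assert (Hsup : forall t, is_lub (E t) (sup t)) by (intro t; apply epsilon_spec, Hlub).
  assert (Hup : forall x t, Rabs (w x (Rmax 0 t)) <= sup t)
    by (intros x t; apply (proj1 (Hsup t)); exists x; reflexivity).
  assert (Hcont : forall c, 0 <= c <= T -> continuity_pt sup c).
  { intros c [Hc0 _]; apply eps_continuity_pt; intros e He.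
    destruct (Hc c Hc0 (e / 2) ltac:(lra)) as [dl [Hdl Hclose]].
    exists dl; split; [exact Hdl|]; intros t Ht.
    assert (Hr : Rabs (Rmax 0 t - c) < dl)
      by (unfold Rmax; destruct Rle_dec; unfold Rabs in *; repeat destruct Rcase_abs; lra).
    assert (Hx : forall x, Rabs (Rabs (w x (Rmax 0 t)) - Rabs (w x (Rmax 0 c))) <= e / 2).
    { intro x; rewrite (Rmax_right 0 c Hc0).
      eapply Rle_trans; [apply Rabs_triang_inv2|apply (Hclose _ (Rmax_l _ _) Hr)]. }
    assert (A : sup t <= sup c + e / 2).
    { apply (proj2 (Hsup t)); intros y [x ->].
      pose proof (Hx x) as H1; pose proof (Hup x c); apply Rabs_le_iff in H1; lra. }
    assert (B : sup c <= sup t + e / 2).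
    { apply (proj2 (Hsup c)); intros y [x ->].
      pose proof (Hx x) as H1; pose proof (Hup x t); apply Rabs_le_iff in H1; lra. }
    apply Rabs_def1; lra. }
  destruct (continuity_ab_maj sup 0 T HT Hcont) as [tM [HM _]].
  exists (sup tM); intros x t Ht.
  pose proof (Hup x t) as H1; rewrite Rmax_right in H1 by apply Ht.
  pose proof (HM t Ht); lra.
Qed.

(* The spatial minimum value is a continuous function
   of time, which attains its minimum on [0, T]. *)
Lemma evt_box_interval n (Phi : pt n -> R -> R) R0 T : 0 <= R0 -> 0 <= T ->
  (forall t, 0 <= t <= T -> unif_cont_on (inbox R0) (fun x => Phi x t)) ->
  (forall c, 0 <= c <= T -> forall e, e > 0 -> exists dl, dl > 0 /\
     forall t, 0 <= t <= T -> Rabs (t - c) < dl ->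
       forall x, inbox R0 x -> Rabs (Phi x t - Phi x c) < e) ->
  exists xs ts, inbox R0 xs /\ 0 <= ts <= T /\
    forall y t, inbox R0 y -> 0 <= t <= T -> Phi xs ts <= Phi y t.
Proof.
  intros HR HT Hsp Htm.
  set (argmin := fun t => epsilon (inhabits (fun _ : Fin.t n => 0))
        (fun xs => inbox R0 xs /\ forall y, inbox R0 y -> Phi xs (cut T t) <= Phi y (cut T t))).
  assert (Harg : forall t, inbox R0 (argmin t) /\
            forall y, inbox R0 y -> Phi (argmin t) (cut T t) <= Phi y (cut T t)).
  { intro t; apply epsilon_spec, evt_box; [exact HR|apply Hsp, cut_range, HT]. }
  set (m := fun t => Phi (argmin t) (cut T t)).
  assert (Hmc : forall c, 0 <= c <= T -> continuity_pt m c).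
  { intros c Hc; apply eps_continuity_pt; intros e He.
    destruct (Htm c Hc e He) as [dl [Hdl Hclose]]; exists dl; split; [exact Hdl|].
    intros t Ht; unfold m.
    destruct (Harg t) as [It Mt]; destruct (Harg c) as [Ic Mc].
    apply (min_value_close (fun y s => Phi y (cut T s)) (inbox R0) argmin t c e It Ic Mt Mc).
    intros y Iy; rewrite (cut_id T c Hc).
    apply Hclose; [apply cut_range, HT|eapply Rle_lt_trans; [apply cut_lip|]|]; assumption. }
  destruct (continuity_ab_min m 0 T HT Hmc) as [ts [Hts Hts_range]].
  exists (argmin ts), ts; split; [apply Harg|split; [exact Hts_range|]].
  intros y t Hy Ht; pose proof (Hts t Ht) as H1; unfold m in H1.
  pose proof (proj2 (Harg t) y Hy) as H2.
  rewrite (cut_id T t Ht) in *; rewrite (cut_id T ts Hts_range) in H1; lra.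
Qed.

Lemma dlim_lin (f g : R -> R) a b s l l' :
  derivable_pt_lim f s l -> derivable_pt_lim g s l' ->
  derivable_pt_lim (fun y => a * f y + b * g y) s (a * l + b * l').
Proof.
  intros Hf Hg; apply (derivable_pt_lim_plus (mult_real_fct a f) (mult_real_fct b g));
    apply derivable_pt_lim_scal; assumption.
Qed.

Lemma dlim_lin_add (f g : R -> R) a s l l' :
  derivable_pt_lim f s l -> derivable_pt_lim g s l' ->
  derivable_pt_lim (fun y => a * f y + g y) s (a * l + l').
Proof.
  intros Hf Hg; apply (derivable_pt_lim_plus (mult_real_fct a f) g);
    [apply derivable_pt_lim_scal|]; assumption.
Qed.

Lemma dlim_scal_id c s : derivable_pt_lim (fun y => c * y) s c.
Proof.
  pose proof (derivable_pt_lim_scal id c s 1 (derivable_pt_lim_id s)) as H.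
  rewrite Rmult_1_r in H; exact H.
Qed.

Lemma dlim_aff a c s : derivable_pt_lim (fun y => a + c * y) s c.
Proof.
  pose proof (derivable_pt_lim_plus (fct_cte a) (mult_real_fct c id) s _ _
    (derivable_pt_lim_const a s) (derivable_pt_lim_scal id c s _ (derivable_pt_lim_id s))) as H.
  rewrite Rmult_1_r, Rplus_0_l in H; exact H.
Qed.

Lemma dlim_sq c s : derivable_pt_lim (fun y => c + y * y) s (2 * s).
Proof.
  replace (2 * s) with (0 + (1 * id s + id s * 1)) by (unfold id; ring).
  apply (derivable_pt_lim_plus (fct_cte c) (id * id)%F);
    [apply derivable_pt_lim_const|apply derivable_pt_lim_mult; apply derivable_pt_lim_id].
Qed.

Lemma dlim_exp lam t : derivable_pt_lim (fun s => exp (- lam * s)) t (exp (- lam * t) * (- lam)).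
Proof.
  apply (derivable_pt_lim_comp (fun s => - lam * s) exp); [|apply derivable_pt_lim_exp].
  apply dlim_scal_id.
Qed.

Lemma dlim_continuity (f : R -> R) s l : derivable_pt_lim f s l -> continuity_pt f s.
Proof. intro H; apply derivable_continuous_pt; exists l; exact H. Qed.

Lemma weighted_equicont n (w : pt n -> R -> R) (a b : R -> R) M c :
  (forall e, e > 0 -> exists dl, dl > 0 /\ forall t, 0 <= t -> Rabs (t - c) < dl ->
     forall x, Rabs (w x t - w x c) <= e) ->
  (forall x, Rabs (w x c) <= M) -> (forall t, 0 <= t -> Rabs (a t) <= 1) ->
  continuity_pt a c -> continuity_pt b c ->
  forall e, e > 0 -> exists dl, dl > 0 /\ forall t, 0 <= t -> Rabs (t - c) < dl ->
    forall x, Rabs (a t * w x t + b t - (a c * w x c + b c)) < e.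
Proof.
  intros Hw HM Ha Hac Hbc e He.
  assert (HM0 : 0 <= M) by (pose proof (HM (fun _ => 0)); pose proof (Rabs_pos (w (fun _ => 0) c)); lra).
  destruct (Hw (e / 4) ltac:(lra)) as [dl1 [Hdl1 Hw1]].
  destruct (continuity_pt_eps a c Hac (e / 4 / (M + 1))) as [dl2 [Hdl2 Ha2]];
    [apply Rdiv_lt_0_compat; lra|].
  destruct (continuity_pt_eps b c Hbc (e / 4) ltac:(lra)) as [dl3 [Hdl3 Hb3]].
  exists (Rmin dl1 (Rmin dl2 dl3)); split; [repeat apply Rmin_glb_lt; assumption|].
  intros t Ht Htc x.
  pose proof (Rmin_l dl1 (Rmin dl2 dl3)); pose proof (Rmin_r dl1 (Rmin dl2 dl3));
    pose proof (Rmin_l dl2 dl3); pose proof (Rmin_r dl2 dl3).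
  assert (A1 : Rabs (a t * (w x t - w x c)) <= e / 4).
  { rewrite Rabs_mult; pose proof (Ha t Ht); pose proof (Rabs_pos (w x t - w x c)).
    pose proof (Hw1 t Ht ltac:(lra) x); nra. }
  assert (A2 : Rabs ((a t - a c) * w x c) <= e / 4).
  { rewrite Rabs_mult; pose proof (Ha2 t ltac:(lra)); pose proof (HM x).
    pose proof (Rabs_pos (a t - a c)); pose proof (frac_lt_1 M HM0).
    apply Rle_trans with (e / 4 / (M + 1) * M); [apply Rmult_le_compat; try apply Rabs_pos; lra|].
    replace (e / 4 / (M + 1) * M) with (e / 4 * (M / (M + 1))) by (field; lra); nra. }
  pose proof (Hb3 t ltac:(lra)) as A3.
  replace (a t * w x t + b t - (a c * w x c + b c))
    with (a t * (w x t - w x c) + (a t - a c) * w x c + (b t - b c)) by ring.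
  apply Rabs_le_iff in A1, A2; apply Rabs_def2 in A3; apply Rabs_def1; lra.
Qed.

Lemma laplacian_nonneg_at_min n (f : pt n -> R) (f1 : Fin.t n -> pt n -> R) (f2 : Fin.t n -> R) xs :
  (forall i x, derivable_pt_lim (fun s => f (upd x i s)) (x i) (f1 i x)) ->
  (forall i, derivable_pt_lim (fun s => f1 i (upd xs i s)) (xs i) (f2 i)) ->
  (forall i, exists eta, eta > 0 /\ forall s, Rabs (s - xs i) < eta -> f xs <= f (upd xs i s)) ->
  0 <= sumFin n f2.
Proof.
  intros Hf1 Hf2 Hmin; apply sumFin_nonneg; intro i.
  destruct (Hmin i) as [eta [Heta Hloc]].
  apply (second_deriv_min (fun s => f (upd xs i s)) (fun s => f1 i (upd xs i s)) (xs i) _ eta Heta).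
  - intro s; pose proof (Hf1 i (upd xs i s)) as H.
    rewrite upd_same in H.
    replace (fun s' => f (upd (upd xs i s) i s')) with (fun s' => f (upd xs i s')) in H
      by (apply functional_extensionality; intro; rewrite upd_upd; reflexivity).
    exact H.
  - apply Hf2.
  - intros s Hs; rewrite upd_id; exact (Hloc s Hs).
Qed.

Definition has_derivs {n : nat} (w wt lap : pt n -> R -> R) : Prop :=
  (forall x t, 0 < t -> derivable_pt_lim (fun s => w x s) t (wt x t)) /\
  exists D1 D2 : Fin.t n -> pt n -> R -> R,
    (forall i x t, 0 < t -> derivable_pt_lim (fun s => w (upd x i s) t) (x i) (D1 i x t)) /\
    (forall i x t, 0 < t -> derivable_pt_lim (fun s => D1 i (upd x i s) t) (x i) (D2 i x t)) /\
    (forall x t, 0 < t -> lap x t = sumFin n (fun i => D2 i x t)).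

Lemma classical_has_derivs n (w wt lap : pt n -> R -> R) :
  classical w wt lap -> has_derivs w wt lap.
Proof.
  intros (_ & _ & Hwt & D1 & D2 & _ & HD1 & HD2 & Hlap).
  split; [exact Hwt|exists D1, D2; auto].
Qed.

(* The penalised function used in the maximum principle: the exponential
   weight absorbs the zero-order term, del * N2 x forces the minimum into a
   bounded region, and the linear term in t makes the time derivative
   strictly dominate the Laplacian of del * N2 x. *)
Definition penalized {n : nat} (d lam del : R) (w : pt n -> R -> R) (x : pt n) (t : R) : R :=
  exp (- lam * t) * w x t + del * N2 x + del * ((2 * d * INR n + 1) * t).

Lemma penalized_no_negative_min n d K lam del (w wt lap : pt n -> R -> R) xs ts :
  0 <= d -> K <= lam -> 0 < del -> 0 < ts -> has_derivs w wt lap ->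
  w xs ts <= 0 -> K * w xs ts <= wt xs ts - d * lap xs ts ->
  (forall i, exists eta, eta > 0 /\ forall s, Rabs (s - xs i) < eta ->
     penalized d lam del w xs ts <= penalized d lam del w (upd xs i s) ts) ->
  (forall s, 0 < s <= ts -> penalized d lam del w xs ts <= penalized d lam del w xs s) ->
  False.
Proof.
  intros Hd HK Hdel Hts [Hwt [D1 [D2 [HD1 HD2Hlap]]]] Hw HPDE Hspace Htime.
  destruct HD2Hlap as [HD2 Hlap].
  set (ex := exp (- lam * ts)); assert (Hex : 0 < ex) by apply exp_pos.
  set (cc := 2 * d * INR n + 1).
  assert (Hlap_min : 0 <= ex * lap xs ts + del * 2 * INR n).
  { replace (del * 2 * INR n) with (sumFin n (fun _ => del * 2)) by (rewrite sumFin_const; ring).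
    rewrite (Hlap xs ts Hts), <- sumFin_scal, <- sumFin_plus.
    apply (laplacian_nonneg_at_min n (fun x => penalized d lam del w x ts)
             (fun i x => ex * D1 i x ts + del * (2 * x i)) _ xs); [| |exact Hspace].
    - intros i x.
      replace (fun s => penalized d lam del w (upd x i s) ts)
        with (fun s => ex * w (upd x i s) ts + del * ((N2 x - x i * x i + cc * ts) + s * s))
        by (apply functional_extensionality; intro s; unfold penalized; rewrite N2_upd; fold ex cc; ring).
      apply dlim_lin; [apply HD1, Hts|apply dlim_sq].
    - intro i.
      replace (fun s => ex * D1 i (upd xs i s) ts + del * (2 * upd xs i s i))
        with (fun s => ex * D1 i (upd xs i s) ts + del * (2 * s))
        by (apply functional_extensionality; intro s; rewrite upd_same; reflexivity).
      apply dlim_lin; [apply HD2, Hts|apply dlim_scal_id]. }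
  assert (Hdt : exp (- lam * ts) * (- lam) * w xs ts + ex * wt xs ts + del * cc <= 0).
  { apply (deriv_left_min (fun s => penalized d lam del w xs s) ts _ ts Hts).
    - replace (fun s => penalized d lam del w xs s)
        with (fun s => 1 * (exp (- lam * s) * w xs s) + del * (N2 xs + cc * s))
        by (apply functional_extensionality; intro s; unfold penalized; fold cc; ring).
      replace (exp (- lam * ts) * - lam * w xs ts + ex * wt xs ts + del * cc)
        with (1 * (exp (- lam * ts) * - lam * w xs ts + exp (- lam * ts) * wt xs ts) + del * cc)
        by (unfold ex; ring).
      apply dlim_lin; [|apply dlim_aff].
      exact (derivable_pt_lim_mult _ (fun s => w xs s) ts _ _ (dlim_exp lam ts) (Hwt xs ts Hts)).
    - intros s Hs; apply Htime; lra. }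
  fold ex in Hdt.
  assert (H1 : ex * (K * w xs ts) <= ex * (wt xs ts - d * lap xs ts))
    by (apply Rmult_le_compat_l; lra).
  assert (H2 : ex * (lam * w xs ts) <= ex * (K * w xs ts))
    by (apply Rmult_le_compat_l; nra).
  assert (H3 : - (d * (del * 2 * INR n)) <= d * (ex * lap xs ts)) by nra.
  unfold cc in Hdt; nra.
Qed.

Lemma exp_neg_le1 lam t : 0 <= lam -> 0 <= t -> 0 < exp (- lam * t) <= 1.
Proof.
  intros Hl Ht; split; [apply exp_pos|rewrite <- exp_0].
  destruct (Req_dec (- lam * t) 0) as [->|]; [lra|left; apply exp_increasing; nra].
Qed.

Lemma penalized_unif_cont n d lam del (w : pt n -> R -> R) t R0 :
  0 <= R0 -> BUC (fun x => w x t) ->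
  unif_cont_on (inbox R0) (fun x => penalized d lam del w x t).
Proof.
  intros HR [_ Hw].
  apply (unif_cont_lincomb n _ (fun x => w x t) N2); [|apply N2_unif_cont, HR].
  intros e He; destruct (Hw e He) as [dl [Hdl H]]; exists dl; split; auto.
Qed.

Lemma penalized_equicont n d lam del (w : pt n -> R -> R) c :
  0 <= lam -> 0 <= c -> C_BUC w ->
  forall e, e > 0 -> exists dl, dl > 0 /\ forall t, 0 <= t -> Rabs (t - c) < dl ->
    forall x, Rabs (penalized d lam del w x t - penalized d lam del w x c) < e.
Proof.
  intros Hlam Hc [Hb Hw] e He.
  destruct (Hb c Hc) as [[M HM] _].
  destruct (weighted_equicont n w (fun t => exp (- lam * t)) (fun t => del * (2 * d * INR n + 1) * t)
              M c (Hw c Hc) HM) with (e := e) as [dl [Hdl H]]; try assumption.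
  - intros t Ht; destruct (exp_neg_le1 lam t Hlam Ht).
    rewrite Rabs_right; lra.
  - exact (dlim_continuity _ _ _ (dlim_exp lam c)).
  - exact (dlim_continuity _ _ _ (dlim_scal_id _ c)).
  - exists dl; split; [exact Hdl|]; intros t Ht Htc x.
    unfold penalized; replace (_ - _) with
      (exp (- lam * t) * w x t + del * (2 * d * INR n + 1) * t
       - (exp (- lam * c) * w x c + del * (2 * d * INR n + 1) * c)) by ring.
    exact (H t Ht Htc x).
Qed.

Lemma inbox_upd n R0 (x : pt n) i s : inbox R0 x -> Rabs s <= R0 -> inbox R0 (upd x i s).
Proof.
  intros Hx Hs j; destruct (Fin.eq_dec j i) as [->|Hne];
    [rewrite upd_same|rewrite upd_other]; auto.
Qed.

Lemma penalized_min_on_cube n d lam del (w : pt n -> R -> R) R0 T :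
  0 <= lam -> 0 <= R0 -> 0 <= T -> C_BUC w ->
  exists xs ts, inbox R0 xs /\ 0 <= ts <= T /\ forall y t, inbox R0 y -> 0 <= t <= T ->
    penalized d lam del w xs ts <= penalized d lam del w y t.
Proof.
  intros Hlam HR HT Hw; apply evt_box_interval; [exact HR|exact HT| |].
  - intros t Ht; apply penalized_unif_cont; [exact HR|apply (proj1 Hw); lra].
  - intros c Hc e He; destruct (penalized_equicont n d lam del w c) with (e := e)
      as [dl [Hdl Hclose]]; try (assumption || lra).
    exists dl; split; [exact Hdl|]; intros t Ht Htc x _; apply Hclose; lra.
Qed.

Lemma small_penalty z a : 0 < z -> 0 <= a -> exists del, 0 < del /\ del * a < z.
Proof.
  intros Hz Ha; exists (z / (2 * (a + 1))); split; [apply Rdiv_lt_0_compat; lra|].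
  replace (z / (2 * (a + 1)) * a) with (z / 2 * (a / (a + 1))) by (field; lra).
  pose proof (frac_lt_1 a Ha); nra.
Qed.

Lemma large_radius M del : 0 < del -> exists R0, 1 <= R0 /\ M < del * (R0 * R0).
Proof.
  intro Hdel; set (R0 := Rmax 1 ((Rabs M + 1) / del)).
  assert (H1 : 1 <= R0) by apply Rmax_l.
  assert (H2 : (Rabs M + 1) / del <= R0) by apply Rmax_r.
  exists R0; split; [exact H1|].
  assert (del * ((Rabs M + 1) / del) = Rabs M + 1) by (field; lra).
  assert (del * ((Rabs M + 1) / del) <= del * R0) by (apply Rmult_le_compat_l; lra).
  assert (del * R0 <= del * (R0 * R0)) by (apply Rmult_le_compat_l; nra).
  pose proof (Rle_abs M); lra.
Qed.

(* Weak maximum principle on R^n x [0, oo) for bounded uniformly continuous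
   functions: if w >= 0 initially and  K w <= w_t - d lap w  wherever w <= 0,
   then w >= 0.  Were w x0 T < 0, the penalised function would attain a
   negative minimum over a large cube times [0, T], at a positive time and an
   interior point, which penalized_no_negative_min rules out. *)
Lemma max_principle n d K (w wt lap : pt n -> R -> R) :
  0 <= d -> C_BUC w -> has_derivs w wt lap ->
  (forall x, 0 <= w x 0) ->
  (forall x t, 0 < t -> w x t <= 0 -> K * w x t <= wt x t - d * lap x t) ->
  forall x t, 0 <= t -> 0 <= w x t.
Proof.
  intros Hd Hw Hder H0 HK x0 T HT; apply Rnot_lt_le; intro Hneg.
  set (lam := Rmax K 0).
  assert (HKlam : K <= lam) by apply Rmax_l; assert (Hlam : 0 <= lam) by apply Rmax_r.
  set (cc := 2 * d * INR n + 1); assert (Hcc : 1 <= cc) by (unfold cc; pose proof (pos_INR n); nra).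
  destruct (C_BUC_bounded n w T HT Hw) as [M HM].
  destruct (small_penalty (- (exp (- lam * T) * w x0 T)) (N2 x0 + cc * T)) as [del [Hdel Hsmall]].
  { destruct (exp_neg_le1 lam T Hlam HT); nra. }
  { pose proof (N2_nonneg n x0); nra. }
  destruct (large_radius M del Hdel) as [R0 [HR1 HR0]].
  set (P := penalized d lam del w).
  assert (HP0 : P x0 T < 0) by (unfold P, penalized; fold cc; lra).
  assert (Hinside : forall x t, 0 <= t <= T -> P x t < 0 -> forall i, Rabs (x i) < R0).
  { intros x t Ht HP i.
    destruct (exp_neg_le1 lam t Hlam ltac:(lra)).
    pose proof (HM x t Ht) as Hb; apply Rabs_le_iff in Hb.
    assert (0 <= del * (cc * t)) by (apply Rmult_le_pos; nra).
    assert (del * N2 x < M) by (unfold P, penalized in HP; fold cc in HP; nra).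
    pose proof (N2_ge n x i).
    assert (x i * x i < R0 * R0) by (apply (Rmult_lt_reg_l del); nra).
    apply Rabs_def1; nra. }
  destruct (penalized_min_on_cube n d lam del w R0 T) as [xs [ts [Hxs [Hts Hmin]]]];
    try (assumption || lra).
  assert (HPs : P xs ts < 0).
  { assert (Hx0 : inbox R0 x0) by (intro i; left; apply (Hinside x0 T); [lra|exact HP0]).
    pose proof (Hmin x0 T Hx0 ltac:(lra)); unfold P in HP0 |- *; lra. }
  assert (Hts0 : 0 < ts).
  { destruct Hts as [[|Hts0] _]; [assumption|subst ts; exfalso].
    unfold P, penalized in HPs; rewrite Rmult_0_r, exp_0 in HPs.
    pose proof (H0 xs); pose proof (N2_nonneg n xs); nra. }
  assert (Hwneg : w xs ts <= 0).
  { destruct (exp_neg_le1 lam ts Hlam ltac:(lra)); pose proof (N2_nonneg n xs).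
    unfold P, penalized in HPs; fold cc in HPs.
    assert (0 <= del * (cc * ts)) by (apply Rmult_le_pos; nra); nra. }
  apply (penalized_no_negative_min n d K lam del w wt lap xs ts); try assumption.
  - apply HK; assumption.
  - intro i; exists (R0 - Rabs (xs i)); split; [pose proof (Hinside xs ts Hts HPs i); lra|].
    intros s Hs; apply Hmin; [|lra].
    apply inbox_upd; [exact Hxs|pose proof (Rabs_triang_inv s (xs i)); lra].
  - intros s Hs; apply Hmin; [exact Hxs|lra].
Qed.

Lemma C_BUC_affine n a (u : pt n -> R -> R) (b : R -> R) :
  C_BUC u -> (forall t, 0 <= t -> continuity_pt b t) ->
  C_BUC (fun x t => a * u x t + b t).
Proof.
  intros [Hb Hc] Hbc; split.
  - intros t Ht; destruct (Hb t Ht) as [[M HM] Huc]; split.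
    + exists (Rabs a * M + Rabs (b t)); intro x.
      eapply Rle_trans; [apply Rabs_triang|rewrite Rabs_mult].
      apply Rplus_le_compat_r, Rmult_le_compat_l; [apply Rabs_pos|apply HM].
    + intros e He; destruct (Huc _ (scaled_tol_pos a e He)) as [dl [Hdl H]].
      exists dl; split; [exact Hdl|]; intros x y Hxy.
      replace (a * u x t + b t - (a * u y t + b t)) with (a * (u x t - u y t)) by ring.
      apply Rabs_mult_small; [exact He|left; apply H, Hxy].
  - intros t0 Ht0 e He.
    destruct (Hc t0 Ht0 _ (scaled_tol_pos a (e / 2) ltac:(lra))) as [dl1 [Hdl1 H1]].
    destruct (continuity_pt_eps b t0 (Hbc t0 Ht0) (e / 2) ltac:(lra)) as [dl2 [Hdl2 H2]].
    exists (Rmin dl1 dl2); split; [apply Rmin_glb_lt; assumption|]; intros t Ht Htt x.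
    pose proof (Rmin_l dl1 dl2); pose proof (Rmin_r dl1 dl2).
    pose proof (Rabs_mult_small a _ (e / 2) ltac:(lra) (H1 t Ht ltac:(lra) x)).
    pose proof (H2 t ltac:(lra)).
    replace (a * u x t + b t - (a * u x t0 + b t0)) with (a * (u x t - u x t0) + (b t - b t0)) by ring.
    eapply Rle_trans; [apply Rabs_triang|lra].
Qed.

Lemma has_derivs_affine n a (u ut lap : pt n -> R -> R) (b db : R -> R) :
  has_derivs u ut lap -> (forall t, 0 < t -> derivable_pt_lim b t (db t)) ->
  has_derivs (fun x t => a * u x t + b t) (fun x t => a * ut x t + db t) (fun x t => a * lap x t).
Proof.
  intros [Hut [D1 [D2 [HD1 [HD2 Hlap]]]]] Hb; split.
  - intros x t Ht; apply (dlim_lin_add (fun s => u x s) b); [apply Hut|apply Hb]; exact Ht.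
  - exists (fun i x t => a * D1 i x t), (fun i x t => a * D2 i x t); repeat split.
    + intros i x t Ht; rewrite <- (Rplus_0_r (a * D1 i x t)).
      apply (dlim_lin_add (fun s => u (upd x i s) t) (fct_cte (b t)));
        [apply HD1, Ht|apply derivable_pt_lim_const].
    + intros i x t Ht; apply (derivable_pt_lim_scal (fun s => D1 i (upd x i s) t)), HD2, Ht.
    + intros x t Ht; rewrite Hlap, sumFin_scal by exact Ht; reflexivity.
Qed.

Lemma comparison_affine n d K a (u ut lap : pt n -> R -> R) (b db : R -> R) :
  0 <= d -> C_BUC u -> has_derivs u ut lap ->
  (forall t, 0 <= t -> derivable_pt_lim b t (db t)) ->
  (forall x, 0 <= a * u x 0 + b 0) ->
  (forall x t, 0 < t -> a * u x t + b t <= 0 ->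
     K * (a * u x t + b t) <= a * ut x t + db t - d * (a * lap x t)) ->
  forall x t, 0 <= t -> 0 <= a * u x t + b t.
Proof.
  intros Hd Hu Hder Hb H0 HK.
  apply (max_principle n d K _ (fun x t => a * ut x t + db t) (fun x t => a * lap x t) Hd);
    [apply C_BUC_affine| apply has_derivs_affine| |]; try assumption.
  - intros t Ht; exact (dlim_continuity _ _ _ (Hb t Ht)).
  - intros t Ht; apply Hb; lra.
Qed.

Definition reaction (eps h q U V : R) : R :=
  / eps * U * (1 - U) - h * V * (U - q) / (U + q).

(* g(U) - g(ubar) = (U - ubar) * g_quot ubar U. *)
Definition g_quot (eps h q ubar U : R) : R :=
  - (U * U + U * ubar + ubar * ubar) + (1 - q) * (U + ubar) + q - eps * h * q.

(* Since ubar is a root of g, the reaction term splits into a part vanishing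
   at U = ubar and a part vanishing at U = q or V = q. *)
Lemma reaction_identity eps h q ubar U V :
  0 < eps -> 0 < U + q -> g_BZ eps h q ubar = 0 ->
  - reaction eps h q U V * (eps * (U + q))
  = (ubar - U) * g_quot eps h q ubar U + eps * h * (V - q) * (U - q).
Proof.
  intros He HU Hg.
  assert (Hfactor : U * (1 - U) * (U + q) - eps * h * q * (U - q)
                    = (U - ubar) * g_quot eps h q ubar U).
  { transitivity (g_BZ eps h q U - g_BZ eps h q ubar);
      [rewrite Hg; unfold g_BZ; ring|unfold g_BZ, g_quot; ring]. }
  assert (Hreac : - reaction eps h q U V * (eps * (U + q))
                  = - (U * (1 - U) * (U + q)) + eps * h * V * (U - q))
    by (unfold reaction; field; lra).
  rewrite Hreac; lra.
Qed.

Lemma reaction_nonneg_below_q eps h q U V :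
  0 < eps -> 0 < h -> 0 < q < 1 -> 0 <= U <= q -> 0 <= V -> 0 <= reaction eps h q U V.
Proof.
  intros He Hh Hq HU HV; unfold reaction.
  assert (0 <= / eps * U * (1 - U)) by (pose proof (Rinv_0_lt_compat eps He); apply Rmult_le_pos; nra).
  assert (h * V * (U - q) / (U + q) <= 0).
  { unfold Rdiv; pose proof (Rinv_0_lt_compat (U + q) ltac:(lra)).
    assert (h * V * (U - q) <= 0) by (pose proof (Rmult_le_pos h V ltac:(lra) HV); nra); nra. }
  lra.
Qed.

Lemma reaction_above_ubar eps h q ubar U V :
  0 < eps -> 0 < h -> 0 < q < 1 -> q < ubar -> g_BZ eps h q ubar = 0 ->
  ubar <= U -> q <= V -> 2 / (q * eps) * (ubar - U) <= - reaction eps h q U V.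
Proof.
  intros He Hh Hq Hub Hg HU HV.
  assert (Hpos : 0 < q * eps * (U + q)) by (apply Rmult_lt_0_compat; [apply Rmult_lt_0_compat|]; lra).
  apply Rmult_le_reg_r with (q * eps * (U + q)); [exact Hpos|].
  replace (- reaction eps h q U V * (q * eps * (U + q)))
    with (q * (- reaction eps h q U V * (eps * (U + q)))) by ring.
  rewrite (reaction_identity eps h q ubar U V He ltac:(lra) Hg).
  replace (2 / (q * eps) * (ubar - U) * (q * eps * (U + q))) with (2 * (ubar - U) * (U + q))
    by (field; lra).
  assert (HQ : q * g_quot eps h q ubar U <= 2 * (U + q)).
  { unfold g_quot.
    assert (0 <= q * (U * U + U * ubar + ubar * ubar)) by (apply Rmult_le_pos; nra).
    assert (0 <= eps * h * q * q) by (repeat apply Rmult_le_pos; lra).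
    assert (q * (1 - q) * (U + ubar) <= U + ubar) by nra.
    nra. }
  assert (0 <= eps * h * ((V - q) * (U - q))) by (apply Rmult_le_pos; nra).
  nra.
Qed.

Definition C_up (eps h q : R) : R := (3 + eps * h * q) / (2 * q * eps).

Lemma C_up_pos eps h q : 0 < eps -> 0 < h -> 0 < q -> 0 < C_up eps h q.
Proof.
  intros He Hh Hq; assert (0 < eps * h * q) by (repeat apply Rmult_lt_0_compat; lra).
  unfold C_up; apply Rdiv_lt_0_compat; [lra|repeat apply Rmult_lt_0_compat; lra].
Qed.

Lemma reaction_below_ubar eps h q ubar U V :
  0 < eps -> 0 < h -> 0 < q < 1 -> ubar < 1 -> g_BZ eps h q ubar = 0 ->
  q <= U <= ubar -> q <= V ->
  - C_up eps h q * (ubar - U) + h / 2 * ((V - q) * (U - q)) <= - reaction eps h q U V.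
Proof.
  intros He Hh Hq Hub Hg HU HV.
  assert (Hpos : 0 < eps * (U + q)) by (apply Rmult_lt_0_compat; lra).
  apply Rmult_le_reg_r with (eps * (U + q)); [exact Hpos|].
  rewrite (reaction_identity eps h q ubar U V He ltac:(lra) Hg).
  assert (HQ : - (3 + eps * h * q) <= g_quot eps h q ubar U).
  { unfold g_quot; assert (0 <= (1 - q) * (U + ubar)) by (apply Rmult_le_pos; lra).
    assert (U * U <= 1) by nra; assert (U * ubar <= 1) by nra; assert (ubar * ubar <= 1) by nra.
    lra. }
  assert (HC : C_up eps h q * (2 * q * eps) = 3 + eps * h * q) by (unfold C_up; field; lra).
  pose proof (C_up_pos eps h q He Hh (proj1 Hq)) as HC0.
  assert (Hgain : 0 <= (V - q) * (U - q)) by nra.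
  assert (A1 : - C_up eps h q * (ubar - U) * (eps * (U + q)) <= (ubar - U) * g_quot eps h q ubar U).
  { assert (0 <= C_up eps h q * (ubar - U)) by nra.
    assert (C_up eps h q * (ubar - U) * (2 * q * eps) <= C_up eps h q * (ubar - U) * (eps * (U + q)))
      by (apply Rmult_le_compat_l; nra).
    nra. }
  assert (A2 : h / 2 * ((V - q) * (U - q)) * (eps * (U + q)) <= eps * h * (V - q) * (U - q)).
  { assert (0 <= eps * h * ((V - q) * (U - q))) by (repeat apply Rmult_le_pos; lra).
    replace (h / 2 * ((V - q) * (U - q)) * (eps * (U + q)))
      with (eps * h * ((V - q) * (U - q)) * ((U + q) / 2)) by field.
    replace (eps * h * (V - q) * (U - q)) with (eps * h * ((V - q) * (U - q)) * 1) by ring.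
    apply Rmult_le_compat_l; lra. }
  lra.
Qed.

Definition rate_u_low (eps h q ubar : R) : R := 2 * q * q * (1 - ubar) / (eps * (h + 2)).

Lemma rate_u_low_pos eps h q ubar :
  0 < eps -> 0 < h -> 0 < q -> ubar < 1 -> 0 < rate_u_low eps h q ubar.
Proof.
  intros; unfold rate_u_low; apply Rdiv_lt_0_compat;
    repeat apply Rmult_lt_0_compat; lra.
Qed.

Lemma reaction_near_q eps h q ubar U V :
  0 < eps -> 0 < h -> 0 < q -> ubar < 1 -> q <= U <= ubar -> 0 <= V <= 1 ->
  U - q <= rate_u_low eps h q ubar -> rate_u_low eps h q ubar <= reaction eps h q U V.
Proof.
  intros He Hh Hq Hub HU HV Hnear; set (c := rate_u_low eps h q ubar) in *.
  assert (Hc : c * (eps * (h + 2)) = 2 * q * q * (1 - ubar)) by (unfold c, rate_u_low; field; lra).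
  assert (Hpos : 0 < eps * (U + q)) by (apply Rmult_lt_0_compat; lra).
  apply Rmult_le_reg_r with (eps * (U + q)); [exact Hpos|].
  replace (reaction eps h q U V * (eps * (U + q)))
    with (U * (1 - U) * (U + q) - eps * h * (V * (U - q))) by (unfold reaction; field; lra).
  assert (A1 : q * (1 - ubar) * (2 * q) <= U * (1 - U) * (U + q))
    by (apply Rmult_le_compat; nra).
  assert (A2 : eps * h * (V * (U - q)) <= eps * h * c)
    by (apply Rmult_le_compat_l; [apply Rmult_le_pos; lra|nra]).
  assert (A3 : c * (eps * (U + q)) <= c * (eps * 2))
    by (apply Rmult_le_compat_l; [nra|apply Rmult_le_compat_l; lra]).
  nra.
Qed.

Definition tau (t : R) : R := t / (1 + t).

Lemma tau_range t : 0 <= t -> 0 <= tau t < 1.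
Proof.
  intro Ht; unfold tau; split; [apply Rmult_le_pos; [lra|left; apply Rinv_0_lt_compat; lra]|].
  apply Rmult_lt_reg_r with (1 + t); [lra|].
  unfold Rdiv; rewrite Rmult_assoc, Rinv_l; lra.
Qed.

Lemma tau_pos t : 0 < t -> 0 < tau t.
Proof. intro Ht; unfold tau; apply Rdiv_lt_0_compat; lra. Qed.

Lemma tau_0 : tau 0 = 0.
Proof. unfold tau; unfold Rdiv; ring. Qed.

Lemma dlim_tau t : 0 <= t -> derivable_pt_lim tau t ((1 - tau t) ^ 2).
Proof.
  intro Ht.
  pose proof (derivable_pt_lim_div id (fun s => 1 + 1 * s) t 1 1 (derivable_pt_lim_id t)
                (dlim_aff 1 1 t) ltac:(lra)) as H.
  replace ((1 - tau t) ^ 2) with ((1 * (1 + 1 * t) - 1 * id t) / (1 + 1 * t)²)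
    by (unfold tau, id, Rsqr; field; lra).
  replace tau with (div_fct id (fun s => 1 + 1 * s)); [exact H|].
  apply functional_extensionality; intro s; unfold div_fct, id, tau; f_equal; ring.
Qed.

Lemma dlim_barrier c0 k m t : 0 <= t ->
  derivable_pt_lim (fun s => c0 + k * tau s ^ S m) t
    (k * (INR (S m) * tau t ^ m * (1 - tau t) ^ 2)).
Proof.
  intro Ht; rewrite <- (Rplus_0_l (k * _)).
  apply (derivable_pt_lim_plus (fct_cte c0) (mult_real_fct k (fun s => tau s ^ S m)));
    [apply derivable_pt_lim_const|apply derivable_pt_lim_scal].
  replace (INR (S m) * tau t ^ m * (1 - tau t) ^ 2)
    with (INR (S m) * tau t ^ Nat.pred (S m) * (1 - tau t) ^ 2) by reflexivity.
  exact (derivable_pt_lim_comp tau (fun y => y ^ S m) t _ _ (dlim_tau t Ht)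
           (derivable_pt_lim_pow (tau t) (S m))).
Qed.

Definition rate_v_low (eps h q ubar : R) : R := rate_u_low eps h q ubar / 3.
Definition rate_u_up (eps h q ubar : R) : R :=
  h * rate_v_low eps h q ubar * rate_u_low eps h q ubar / (2 * (C_up eps h q + 4)).
Definition rate_v_up (eps h q ubar : R) : R := rate_u_up eps h q ubar / 6.

Section Invariant_region.

Variables (n : nat) (eps h d q ubar : R).
Hypotheses (heps : 0 < eps) (hh : 0 < h) (hd : 0 < d) (hq0 : 0 < q) (hq1 : q < 1)
  (hub : q < ubar < 1) (hroot : g_BZ eps h q ubar = 0).
Variables (u v ut vt lapu lapv : pt n -> R -> R).
Hypotheses (HCu : C_BUC u) (HCv : C_BUC v)
  (Hdu : has_derivs u ut lapu) (Hdv : has_derivs v vt lapv)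
  (Hinit : forall x, (q < u x 0 < ubar) /\ (q < v x 0 < ubar))
  (Hnn : forall x t, 0 <= t -> 0 <= u x t /\ 0 <= v x t)
  (Heu : forall x t, 0 < t -> ut x t = lapu x t + reaction eps h q (u x t) (v x t))
  (Hev : forall x t, 0 < t -> vt x t = d * lapv x t - v x t + u x t).

Lemma u_ge_q x t : 0 <= t -> q <= u x t.
Proof.
  intro Ht.
  enough (0 <= 1 * u x t + - q) by lra.
  apply (comparison_affine n 1 0 1 u ut lapu (fun _ => - q) (fun _ => 0)); try lra;
    try assumption; [intros; apply derivable_pt_lim_const| |].
  - intro y; pose proof (Hinit y); lra.
  - intros y s Hs Hw; rewrite Heu by exact Hs; destruct (Hnn y s ltac:(lra)).
    pose proof (reaction_nonneg_below_q eps h q (u y s) (v y s) heps hh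
                  ltac:(lra) ltac:(lra) ltac:(lra)).
    lra.
Qed.

Lemma v_ge_q x t : 0 <= t -> q <= v x t.
Proof.
  intro Ht.
  enough (0 <= 1 * v x t + - q) by lra.
  apply (comparison_affine n d (-1) 1 v vt lapv (fun _ => - q) (fun _ => 0)); try lra;
    try assumption; [intros; apply derivable_pt_lim_const| |].
  - intro y; pose proof (Hinit y); lra.
  - intros y s Hs Hw; rewrite Hev by exact Hs; pose proof (u_ge_q y s ltac:(lra)); lra.
Qed.

Lemma u_le_ubar x t : 0 <= t -> u x t <= ubar.
Proof.
  intro Ht.
  enough (0 <= -1 * u x t + ubar) by lra.
  apply (comparison_affine n 1 (2 / (q * eps)) (-1) u ut lapu (fun _ => ubar) (fun _ => 0));
    try lra; try assumption; [intros; apply derivable_pt_lim_const| |].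
  - intro y; pose proof (Hinit y); lra.
  - intros y s Hs Hw; rewrite Heu by exact Hs.
    pose proof (v_ge_q y s ltac:(lra)).
    pose proof (reaction_above_ubar eps h q ubar (u y s) (v y s) heps hh
                  ltac:(lra) ltac:(lra) hroot ltac:(lra) ltac:(lra)).
    lra.
Qed.

Lemma v_le_ubar x t : 0 <= t -> v x t <= ubar.
Proof.
  intro Ht.
  enough (0 <= -1 * v x t + ubar) by lra.
  apply (comparison_affine n d (-1) (-1) v vt lapv (fun _ => ubar) (fun _ => 0)); try lra;
    try assumption; [intros; apply derivable_pt_lim_const| |].
  - intro y; pose proof (Hinit y); lra.
  - intros y s Hs Hw; rewrite Hev by exact Hs; pose proof (u_le_ubar y s ltac:(lra)); lra.
Qed.

Lemma rates_pos : 0 < rate_u_low eps h q ubar /\ 0 < rate_v_low eps h q ubar /\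
  0 < rate_u_up eps h q ubar /\ 0 < rate_v_up eps h q ubar.
Proof.
  assert (Hc : 0 < rate_u_low eps h q ubar) by (apply rate_u_low_pos; lra).
  assert (Hk : 0 < rate_v_low eps h q ubar) by (unfold rate_v_low; lra).
  assert (Hm : 0 < rate_u_up eps h q ubar).
  { pose proof (C_up_pos eps h q heps hh hq0).
    unfold rate_u_up; apply Rdiv_lt_0_compat; [|lra].
    apply Rmult_lt_0_compat; [apply Rmult_lt_0_compat|]; assumption. }
  unfold rate_v_up; repeat split; lra.
Qed.

Lemma u_above_barrier x t : 0 <= t -> q + rate_u_low eps h q ubar * tau t <= u x t.
Proof.
  intro Ht; destruct rates_pos as [Hc _]; set (c := rate_u_low eps h q ubar) in *.
  enough (0 <= 1 * u x t + (- q + - c * tau t ^ 1)) by (simpl in *; lra).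
  apply (comparison_affine n 1 0 1 u ut lapu (fun s => - q + - c * tau s ^ 1)
           (fun s => - c * (INR 1 * tau s ^ 0 * (1 - tau s) ^ 2))); try lra; try assumption.
  - intros s Hs; apply dlim_barrier, Hs.
  - intro y; rewrite tau_0; pose proof (Hinit y); simpl; lra.
  - intros y s Hs Hw; rewrite Heu by exact Hs; simpl in Hw |- *.
    destruct (tau_range s ltac:(lra)) as [T0 T1].
    pose proof (u_ge_q y s ltac:(lra)); pose proof (u_le_ubar y s ltac:(lra)).
    pose proof (v_ge_q y s ltac:(lra)); pose proof (v_le_ubar y s ltac:(lra)).
    assert (Hnear : u y s - q <= c) by nra.
    pose proof (reaction_near_q eps h q ubar (u y s) (v y s) heps hh hq0 ltac:(lra)
                  ltac:(lra) ltac:(lra) Hnear) as Hreac; fold c in Hreac.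
    assert (0 <= (1 - tau s) * (1 - tau s) <= 1) by (split; nra).
    nra.
Qed.

Lemma v_above_barrier x t : 0 <= t -> q + rate_v_low eps h q ubar * tau t ^ 2 <= v x t.
Proof.
  intro Ht; destruct rates_pos as [Hc [Hk _]].
  set (c := rate_u_low eps h q ubar) in *; set (k := rate_v_low eps h q ubar) in *.
  enough (0 <= 1 * v x t + (- q + - k * tau t ^ 2)) by lra.
  apply (comparison_affine n d (-1) 1 v vt lapv (fun s => - q + - k * tau s ^ 2)
           (fun s => - k * (INR 2 * tau s ^ 1 * (1 - tau s) ^ 2))); try lra; try assumption.
  - intros s Hs; apply dlim_barrier, Hs.
  - intro y; rewrite tau_0; pose proof (Hinit y); simpl; lra.
  - intros y s Hs Hw; rewrite Hev by exact Hs; simpl.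
    destruct (tau_range s ltac:(lra)) as [T0 T1].
    pose proof (u_above_barrier y s ltac:(lra)) as Hu; fold c in Hu.
    assert (Hck : c = 3 * k) by (unfold k, rate_v_low; fold c; lra).
    assert (k * (tau s * ((1 - tau s) * ((1 - tau s) * 1))) <= k * tau s)
      by (apply Rmult_le_compat_l; nra).
    assert (k * (tau s * (tau s * 1)) <= k * tau s) by (apply Rmult_le_compat_l; nra).
    rewrite Hck in Hu; lra.
Qed.

Lemma u_below_barrier x t : 0 <= t -> u x t <= ubar - rate_u_up eps h q ubar * tau t ^ 4.
Proof.
  intro Ht; destruct rates_pos as [Hc [Hk [Hm _]]].
  set (c := rate_u_low eps h q ubar) in *; set (k := rate_v_low eps h q ubar) in *.
  set (m := rate_u_up eps h q ubar) in *.
  set (C := C_up eps h q); pose proof (C_up_pos eps h q heps hh hq0) as HC; fold C in HC.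
  enough (0 <= -1 * u x t + (ubar + - m * tau t ^ 4)) by lra.
  apply (comparison_affine n 1 (- C) (-1) u ut lapu (fun s => ubar + - m * tau s ^ 4)
           (fun s => - m * (INR 4 * tau s ^ 3 * (1 - tau s) ^ 2))); try lra; try assumption.
  - intros s Hs; apply dlim_barrier, Hs.
  - intro y; rewrite tau_0; pose proof (Hinit y); simpl; lra.
  - intros y s Hs Hw; rewrite Heu by exact Hs.
    pose proof (tau_range s ltac:(lra)) as Hr.
    pose proof (u_above_barrier y s ltac:(lra)) as Hu; pose proof (v_above_barrier y s ltac:(lra)) as Hv.
    pose proof (u_le_ubar y s ltac:(lra)).
    fold c in Hu; fold k in Hv; set (r := tau s) in Hr, Hu, Hv, Hw |- *.
    pose proof (reaction_below_ubar eps h q ubar (u y s) (v y s) heps hh ltac:(lra) ltac:(lra)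
                  hroot ltac:(nra) ltac:(nra)) as Hreac; fold C in Hreac.
    assert (Hgain : k * r ^ 2 * (c * r) <= (v y s - q) * (u y s - q))
      by (apply Rmult_le_compat; nra).
    assert (Hm_def : m * (2 * (C + 4)) = h * k * c)
      by (unfold m, rate_u_up; fold c k C; field; lra).
    assert (Hprof : r ^ 3 * (C * r + 4 * (1 - r) ^ 2) <= r ^ 3 * (C + 4))
      by (apply Rmult_le_compat_l; [apply pow_le|]; nra).
    assert (m * (r ^ 3 * (C * r + 4 * (1 - r) ^ 2)) <= m * (r ^ 3 * (C + 4)))
      by (apply Rmult_le_compat_l; lra).
    assert (h / 2 * (k * r ^ 2 * (c * r)) = m * (r ^ 3 * (C + 4)))
      by (transitivity (m * (2 * (C + 4)) * r ^ 3 / 2); [rewrite Hm_def|]; field).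
    assert (h / 2 * (k * r ^ 2 * (c * r)) <= h / 2 * ((v y s - q) * (u y s - q)))
      by (apply Rmult_le_compat_l; lra).
    simpl in *; nra.
Qed.

Lemma v_below_barrier x t : 0 <= t -> v x t <= ubar - rate_v_up eps h q ubar * tau t ^ 5.
Proof.
  intro Ht; destruct rates_pos as [_ [_ [Hm Hm3]]].
  set (m := rate_u_up eps h q ubar) in *; set (m3 := rate_v_up eps h q ubar) in *.
  enough (0 <= -1 * v x t + (ubar + - m3 * tau t ^ 5)) by lra.
  apply (comparison_affine n d (-1) (-1) v vt lapv (fun s => ubar + - m3 * tau s ^ 5)
           (fun s => - m3 * (INR 5 * tau s ^ 4 * (1 - tau s) ^ 2))); try lra; try assumption.
  - intros s Hs; apply dlim_barrier, Hs.
  - intro y; rewrite tau_0; pose proof (Hinit y); simpl; lra.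
  - intros y s Hs Hw; rewrite Hev by exact Hs.
    pose proof (tau_range s ltac:(lra)) as Hr.
    pose proof (u_below_barrier y s ltac:(lra)) as Hu; fold m in Hu.
    set (r := tau s) in Hr, Hu, Hw |- *.
    assert (Hm6 : m = 6 * m3) by (unfold m3, rate_v_up; fold m; lra).
    assert (H4 : 0 <= r ^ 4) by (apply pow_le; lra).
    assert (m3 * (r ^ 4 * r) <= m3 * r ^ 4)
      by (apply Rmult_le_compat_l; [lra|rewrite <- (Rmult_1_r (r ^ 4)) at 2; apply Rmult_le_compat_l; lra]).
    assert (m3 * (r ^ 4 * (1 - r) ^ 2) <= m3 * r ^ 4)
      by (apply Rmult_le_compat_l; [lra|rewrite <- (Rmult_1_r (r ^ 4)) at 2; apply Rmult_le_compat_l; nra]).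
    rewrite Hm6 in Hu; replace (INR 5) with 5 by (simpl; ring).
    replace (r ^ 5) with (r ^ 4 * r) in * by ring.
    nra.
Qed.

Lemma solution_in_S x t : 0 < t -> (q < u x t < ubar) /\ (q < v x t < ubar).
Proof.
  intro Ht; pose proof (tau_pos t Ht) as Htau; destruct rates_pos as [Hc [Hk [Hm Hm3]]].
  pose proof (u_above_barrier x t ltac:(lra)); pose proof (v_above_barrier x t ltac:(lra)).
  pose proof (u_below_barrier x t ltac:(lra)); pose proof (v_below_barrier x t ltac:(lra)).
  assert (0 < rate_u_low eps h q ubar * tau t) by (apply Rmult_lt_0_compat; lra).
  assert (0 < rate_v_low eps h q ubar * tau t ^ 2) by (apply Rmult_lt_0_compat; [lra|apply pow_lt; lra]).
  assert (0 < rate_u_up eps h q ubar * tau t ^ 4) by (apply Rmult_lt_0_compat; [lra|apply pow_lt; lra]).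
  assert (0 < rate_v_up eps h q ubar * tau t ^ 5) by (apply Rmult_lt_0_compat; [lra|apply pow_lt; lra]).
  lra.
Qed.

End Invariant_region.

Theorem theorem1 (n : nat) (eps h d q ubar : R)
  (heps : 0 < eps) (hh : 0 < h) (hd : 0 < d) (hq0 : 0 < q) (hq1 : q < 1)
  (hub : q < ubar < 1) (hroot : g_BZ eps h q ubar = 0)
  (u0 v0 : pt n -> R) (hu0 : BUC u0) (hv0 : BUC v0)
  (hS0 : forall x, (q < u0 x < ubar) /\ (q < v0 x < ubar))
  (u v : pt n -> R -> R) (hsol : BZ_solution n eps h d q u0 v0 u v) :
  forall x t, 0 < t -> (q < u x t < ubar) /\ (q < v x t < ubar).
Proof.
  destruct hsol as (HCu & HCv & Hu0 & Hv0 & Hnn & ut & vt & lapu & lapv & Hclu & Hclv & Heu & Hev).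
  apply (solution_in_S n eps h d q ubar heps hh hd hq0 hq1 hub hroot u v ut vt lapu lapv HCu HCv
           (classical_has_derivs n u ut lapu Hclu) (classical_has_derivs n v vt lapv Hclv)).
  - intro x; rewrite Hu0, Hv0; apply hS0.
  - exact Hnn.
  - intros x t Ht; rewrite Heu by exact Ht; unfold reaction; ring.
  - exact Hev.
Qed.
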